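(* Let $\beta\in(0,1)$, $\mu\ge0$, $\eta>0$, $\zeta=\frac{\beta}{1+\eta\mu}$. In the general conversion scheme below with online learner $\Delta_1=\mathbf{0}$, $\Delta_{t+1}=\zeta(\Delta_t-\eta\mathbf{g}_t)$, and with the choice $\mathbf{x}_t=\mathbf{x}_{t-1}+\frac1\zeta\Delta_t$, define $\mathbf{z}_t:=\mathbf{x}_t+\frac{1}{1-\zeta}\Delta_t$. Then for every $t$, $$\mathbf{z}_{t+1}-\mathbf{z}_t=-\frac{\eta}{1-\zeta}\mathbf{g}_t.$$
   Context: General conversion scheme: input $\mathbf{x}_0=\mathbf{w}_0\in\mathbb{R}^d$, $T$, $\mu\ge0$, online learner $\mathcal{A}$. For $t=1,\dots,T$: receive $\Delta_t$ from $\mathcal{A}$; choose $\mathbf{x}_t$; $\mathbf{w}_t=\mathbf{x}_t+\Delta_t$; $\mathbf{y}_t=\mathbf{x}_t+s_t\Delta_t$ with $s_t\sim\mathrm{Unif}[0,1]$ i.i.d.; $\mathbf{g}_t$ is a stochastic gradient of the objective at $\mathbf{y}_t$; send the loss $\ell_t(\mathbf{v})=\langle\mathbf{g}_t,\mathbf{v}\rangle+\frac\mu2\|\mathbf{v}\|^2$ to $\mathcal{A}$. *)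

From mathcomp Require Import all_boot all_order all_algebra.
Set Implicit Arguments. Unset Strict Implicit. Unset Printing Implicit Defensive.
Import Order.TTheory GRing.Theory Num.Theory.
Local Open Scope ring_scope.

Definition zeta_of (R : realFieldType) (beta mu eta : R) : R :=
  beta / (1 + eta * mu).

Definition z_seq (R : realFieldType) (d : nat) (zeta : R)
  (x Delta : nat -> 'rV[R]_d) (t : nat) : 'rV[R]_d :=
  x t + (1 - zeta)^-1 *: Delta t.

From mathcomp Require Import all_boot all_order all_algebra.
From mathcomp Require Import ring lra.
Import Order.TTheory GRing.Theory Num.Theory.
Local Open Scope ring_scope.

(* The choice of x_t makes x_{t+1} - x_t = Delta_{t+1} / zeta = Delta_t - eta g_t.
   Hence z_{t+1} - z_t = (1 + zeta/(1 - zeta)) (Delta_t - eta g_t) - Delta_t/(1 - zeta),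
   and since 1 + zeta/(1 - zeta) = 1/(1 - zeta) the Delta_t terms cancel. *)

Lemma zeta_of_gt0 (R : realFieldType) (beta mu eta : R) :
  0 < beta -> 0 <= mu -> 0 <= eta -> 0 < zeta_of beta mu eta.
Proof.
move=> beta_gt0 mu_ge0 eta_ge0.
by rewrite divr_gt0 // ltr_wpDr // mulr_ge0.
Qed.

Lemma zeta_of_lt1 (R : realFieldType) (beta mu eta : R) :
  beta < 1 -> 0 <= mu -> 0 <= eta -> zeta_of beta mu eta < 1.
Proof.
move=> beta_lt1 mu_ge0 eta_ge0; have etamu_ge0 : 0 <= eta * mu by exact: mulr_ge0.
by rewrite /zeta_of ltr_pdivrMr ?mul1r; lra.
Qed.

Lemma inv1B_eq1D (F : fieldType) (z : F) :
  z != 1 -> (1 - z)^-1 = 1 + z / (1 - z).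
Proof. by move=> z_neq1; field; rewrite subr_eq0 eq_sym. Qed.

Lemma shifted_iterate_step (F : fieldType) (V : lmodType F) (z eta : F)
    (x x' D D' g : V) :
  z != 0 -> z != 1 -> D' = z *: (D - eta *: g) -> x' = x + z^-1 *: D' ->
  (x' + (1 - z)^-1 *: D') - (x + (1 - z)^-1 *: D) = - (eta / (1 - z)) *: g.
Proof.
move=> z_neq0 z_neq1 -> ->.
rewrite !scalerA mulVf // scale1r -[X in x + X + _]scale1r -(addrA x) -scalerDl.
rewrite [_ * z]mulrC -inv1B_eq1D // opprD addrACA subrr add0r -scalerBr.
by rewrite addrAC subrr add0r scalerN scalerA mulrC scaleNr.
Qed.

Theorem proposition2 (R : realFieldType) (d : nat) (beta mu eta : R)
  (g Delta x : nat -> 'rV[R]_d) :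
  0 < beta -> beta < 1 -> 0 <= mu -> 0 < eta ->
  Delta 1%N = 0 ->
  (forall t : nat, (1 <= t)%N ->
     Delta t.+1 = zeta_of beta mu eta *: (Delta t - eta *: g t)) ->
  (forall t : nat, (1 <= t)%N ->
     x t = x t.-1 + (zeta_of beta mu eta)^-1 *: Delta t) ->
  forall t : nat, (1 <= t)%N ->
    z_seq (zeta_of beta mu eta) x Delta t.+1 - z_seq (zeta_of beta mu eta) x Delta t
    = - (eta / (1 - zeta_of beta mu eta)) *: g t.
Proof.
move=> beta_gt0 beta_lt1 mu_ge0 /ltW eta_ge0 _ Delta_step x_step t t_ge1.
have zeta_neq0 : zeta_of beta mu eta != 0 by rewrite gt_eqF ?zeta_of_gt0.
have zeta_neq1 : zeta_of beta mu eta != 1 by rewrite lt_eqF ?zeta_of_lt1.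
exact: shifted_iterate_step zeta_neq0 zeta_neq1 (Delta_step t t_ge1) (x_step t.+1 isT).
Qed.
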